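(* Let $(X_1,f_1)$ and $(X_2,f_2)$ be dynamical systems and $h:X_1\to X_2$ a continuous surjection with $h\circ f_1=f_2\circ h$. If $(X_1,f_1)$ satisfies TRAC 1 and TRAC 2 with respect to a background measure $\mu_0$ (with ergodic measures $\mu_1,\dots,\mu_k$), then $(X_2,f_2)$ satisfies TRAC 1 and TRAC 2 with respect to the background measure $h_*\mu_0$ (with ergodic measures $h_*\mu_1,\dots,h_*\mu_k$). If in addition $h$ is almost open and $(X_1,f_1)$ satisfies TRAC 3, then $(X_2,f_2)$ satisfies TRAC 3. If in addition $h$ is $\mu_0$ almost one-to-one and $(X_1,f_1)$ satisfies TRAC 4, then $(X_2,f_2)$ satisfies TRAC 4.
   Context: Dynamical system: compact metric $X$ with continuous $f$. Background measure: a complete full Borel probability measure (full = every nonempty open set has positive measure). Basic sets are chain components of $f$; the basin of a basic set $B$ is $G(B)=\operatorname{int}\{x:\omega f(x)\subset B\}$ ($\omega f(x)$ the limit set of the forward orbit), and $B$ is visible if $G(B)\ne\emptyset$. $Gen(\mu)$ is the set of points $x$ with $\frac1n\sum_{i<n}u(f^ix)\to\int u\,d\mu$ for all continuous $u$; $|\mu|$ is the support. Tractability conditions with respect to $\mu_0$: TRAC 1: finitely many basic sets. TRAC 2: there are finitely many ergodic invariant probability measures $\mu_1,\dots,\mu_k$ such that every point outside some $\mu_0$-null set is generic for some $\mu_i$. TRAC 3: each $|\mu_i|$ is contained in a visible basic set. TRAC 4: for $i\ne j$, $\mu_0(|\mu_i|\cap|\mu_j|)=0$. $h$ is almost open if $h(U)$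 has nonempty interior whenever $U$ does; $h$ is $\mu_0$ almost one-to-one if $\mu_0(\{x:h^{-1}(h(x))=\{x\}\})=1$. *)

From HB Require Import structures.
From mathcomp Require Import all_boot all_order all_algebra.
From mathcomp Require Import all_classical all_reals all_analysis.

Set Implicit Arguments.
Unset Strict Implicit.
Unset Printing Implicit Defensive.

Import Order.TTheory GRing.Theory Num.Theory.
Import numFieldNormedType.Exports.

Local Open Scope classical_set_scope.
Local Open Scope ring_scope.

Notation borel X := (g_sigma_algebraType (@open X)).

Section dynamics.
Context {R : realType} (X : pseudoPMetricType R).

Definition dyn_system (f : X -> X) : Prop :=
  [/\ hausdorff_space X, compact [set: X] & continuous f].

Definition eps_chain (f : X -> X) (eps : R) (x y : X) : Prop :=
  exists (n : nat) (s : nat -> X),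
    [/\ s 0%N = x, s n.+1 = y & forall i, (i <= n)%N -> ball (f (s i)) eps (s i.+1)].

Definition chain_rel (f : X -> X) (x y : X) : Prop :=
  forall eps : R, 0 < eps -> eps_chain f eps x y.

Definition chain_recurrent (f : X -> X) (x : X) : Prop := chain_rel f x x.

Definition basic_set (f : X -> X) (B : set X) : Prop :=
  exists x, chain_recurrent f x /\
            B = [set y | chain_rel f x y /\ chain_rel f y x].

Definition omega_limit (f : X -> X) (x : X) : set X :=
  \bigcap_(N in [set: nat]) closure [set iter n f x | n in [set n | (N <= n)%N]].

Definition basin (f : X -> X) (B : set X) : set X :=
  interior [set x | omega_limit f x `<=` B].

Definition visible (f : X -> X) (B : set X) : Prop := basin f B !=set0.

Definition support (mu : set (borel X) -> \bar R) : set X :=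
  [set x | forall U : set X, open U -> U x -> (0 < mu U)%E].

Definition full_measure (mu : set (borel X) -> \bar R) : Prop :=
  forall U : set X, open U -> U !=set0 -> (0 < mu U)%E.

Definition probability_measure (mu : set (borel X) -> \bar R) : Prop :=
  mu [set: X] = 1%E.

(* background measure: full Borel probability measure; completeness is
   accounted for by measuring null sets through [negligible]. *)
Definition background_measure (mu : set (borel X) -> \bar R) : Prop :=
  probability_measure mu /\ full_measure mu.

Definition invariant_measure (f : X -> X) (mu : set (borel X) -> \bar R) : Prop :=
  forall A : set (borel X), measurable A -> mu (f @^-1` A) = mu A.

Definition ergodic_measure (f : X -> X) (mu : set (borel X) -> \bar R) : Prop :=
  [/\ probability_measure mu, invariant_measure f mu &
      forall A : set (borel X), measurable A -> f @^-1` A = A ->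
        mu A = 0%E \/ mu A = 1%E].

Definition mean (mu : set (borel X) -> \bar R) (u : X -> R) : R :=
  fine (@integral _ (borel X) R mu [set: borel X] (fun x => (u x)%:E)).

Definition generic (f : X -> X) (mu : set (borel X) -> \bar R) (x : X) : Prop :=
  forall u : X -> R, continuous u ->
    (fun n : nat => (n%:R)^-1 * \sum_(i < n) u (iter i f x)) @ \oo --> mean mu u.

Definition null_set (mu : set (borel X) -> \bar R) (N : set X) : Prop :=
  @negligible _ (borel X) R mu N.

Definition TRAC1 (f : X -> X) : Prop := finite_set (basic_set f).

Definition TRAC2 (f : X -> X) (mu0 : set (borel X) -> \bar R)
    (k : nat) (mus : 'I_k -> set (borel X) -> \bar R) : Prop :=
  (forall i, ergodic_measure f (mus i)) /\
  null_set mu0 (~` [set x | exists i, generic f (mus i) x]).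

Definition TRAC3 (f : X -> X) (k : nat) (mus : 'I_k -> set (borel X) -> \bar R)
  : Prop :=
  forall i, exists B, [/\ basic_set f B, visible f B & support (mus i) `<=` B].

Definition TRAC4 (mu0 : set (borel X) -> \bar R)
    (k : nat) (mus : 'I_k -> set (borel X) -> \bar R) : Prop :=
  forall i j : 'I_k, i != j -> mu0 (support (mus i) `&` support (mus j)) = 0%E.

End dynamics.

Section maps.
Context {R : realType} (X1 X2 : pseudoPMetricType R).

Definition almost_open (h : X1 -> X2) : Prop :=
  forall U : set X1, interior U !=set0 -> interior (h @` U) !=set0.

Definition almost_one_to_one (h : X1 -> X2) (mu0 : set (borel X1) -> \bar R)
  : Prop :=
  null_set mu0 (~` [set x | h @^-1` [set h x] = [set x]]).

Definition push (h : X1 -> X2) (mu : set (borel X1) -> \bar R)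
  : set (borel X2) -> \bar R :=
  fun A => mu (h @^-1` A).

End maps.

From Pilot Require Import Defs.
From HB Require Import structures.
From mathcomp Require Import all_boot all_order all_algebra.
From mathcomp Require Import all_classical all_reals all_analysis.
From mathcomp Require Import finmap zify lra.
From mathcomp Require Import measurable_realfun.

Import Order.TTheory GRing.Theory Num.Theory.
Import numFieldNormedType.Exports.

Set Implicit Arguments.
Unset Strict Implicit.
Unset Printing Implicit Defensive.

Local Open Scope classical_set_scope.
Local Open Scope ring_scope.

(* A semiconjugacy [h] maps eps-chains of [f1] to eps-chains of [f2] (uniform
   continuity on the compact space [X1]), and every chain class of [f2] is the
   class of [h z] for a cluster point [z] of an [f1]-orbit; so the basic sets
   of [f2] are images of those of [f1], and [h] sends generic points of [mu_i]
   to generic points of [h_* mu_i].  Since [h] is a closed map, the support of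
   [h_* mu] lies in [h] of the support of [mu], and the image of a
   sigma-compact set of full [mu_0]-measure of generic points (inner
   regularity) is a Borel set of full [h_* mu_0]-measure.  Almost openness
   lets the basin of a basic set map onto a set with interior inside the basin
   of the image class, and almost injectivity puts almost every point of
   [h^-1 (|h_* mu_i| & |h_* mu_j|)] into [|mu_i| & |mu_j|]. *)

Section metric_topology.
Context {R : realType}.

Lemma continuous_ball (Y Z : pseudoPMetricType R) (g : Y -> Z) x e :
  continuous g -> 0 < e ->
  exists2 d, 0 < d & forall y, ball x d y -> ball (g x) e (g y).
Proof.
move=> gc e_gt0; have /nbhs_ballP [d d_gt0 xdg] := gc x _ (nbhsx_ballx _ _ e_gt0).
by exists d.
Qed.

Lemma compact_uniform_continuity (Y Z : pseudoPMetricType R) (g : Y -> Z) :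
  compact [set: Y] -> continuous g -> forall e, 0 < e ->
  exists2 d, 0 < d & forall a b, ball a d b -> ball (g a) e (g b).
Proof.
move=> cY gc e e_gt0.
pose P d a := forall b, ball a d b -> ball (g a) e (g b).
have P_near : \forall d \near (0:R)^'+, [set: Y] `<=` P d.
  apply: ((compact_near_coveringP _).1 cY R (0:R)^'+ P) => x _.
  have e2_gt0 : 0 < e / 2 by rewrite divr_gt0.
  have [eta eta_gt0 xeta] := continuous_ball x gc e2_gt0.
  have eta2_gt0 : 0 < eta / 2 by rewrite divr_gt0.
  near=> x' d => b /= x'b.
  have xx' : ball x (eta / 2) x' by near: x'; exact: nbhsx_ballx.
  have d_lt : d < eta / 2 by near: d; exact: nbhs_right_lt.
  have xb : ball x eta b by apply: le_ball (ball_triangle xx' x'b); lra.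
  have x'x : ball x eta x' by apply: le_ball xx'; lra.
  by rewrite (splitr e); apply: ball_triangle (ball_sym (xeta _ x'x)) (xeta _ xb).
near (0:R)^'+ => d; exists d; first by near: d; exact: nbhs_right_gt.
move=> a; suff : [set: Y] `<=` P d by apply.
by near: d.
Unshelve. all: by end_near.
Qed.

Lemma compact_nonincreasing_closure (Y : pseudoPMetricType R) (T : nat -> set Y) :
  compact [set: Y] -> (forall n, T n !=set0) ->
  (forall n m, (n <= m)%N -> T m `<=` T n) ->
  exists z, forall n, closure (T n) z.
Proof.
move=> cY Tn0 T_nonincr.
have F_filter : Filter (filter_from [set: nat] T).
  apply: filter_from_filter; first by exists 0%N.
  move=> i j _ _; exists (maxn i j) => // x Tx.
  by split; apply: T_nonincr Tx; rewrite ?leq_maxl ?leq_maxr.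
have F_proper := filter_from_proper F_filter (fun n _ => Tn0 n).
have [z [_ Fz]] := cY _ F_proper (ex_intro2 _ _ 0%N Logic.I (fun _ _ => Logic.I)).
by exists z => n B zB; apply: Fz zB; exists n.
Qed.

End metric_topology.

Section chains.
Context {R : realType} (X : pseudoPMetricType R) (f : X -> X).

Definition chain_len (e : R) (n : nat) (a b : X) := exists s : nat -> X,
  [/\ s 0%N = a, s n.+1 = b & forall i, (i <= n)%N -> ball (f (s i)) e (s i.+1)].

Definition chain_class (x : X) := [set y | chain_rel f x y /\ chain_rel f y x].

Lemma eps_chainE e a b : eps_chain f e a b <-> exists n, chain_len e n a b.
Proof. by split=> -[n [s sP]]; exists n, s. Qed.

Lemma chain_len_cat e n1 n2 a b c :
  chain_len e n1 a b -> chain_len e n2 b c -> chain_len e (n1 + n2).+1 a c.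
Proof.
move=> [s1 [s10 s1n s1P]] [s2 [s20 s2n s2P]].
exists (fun i => if (i <= n1)%N then s1 i else s2 (i - n1.+1)%N); split.
- by rewrite leq0n.
- have -> : ((n1 + n2).+2 <= n1)%N = false by lia.
  by have -> : ((n1 + n2).+2 - n1.+1 = n2.+1)%N by lia.
- move=> i i_le; have [i_lt|[i_gt|->]] : (i < n1 \/ n1 < i \/ i = n1)%N by lia.
  + by rewrite ltnW // i_lt; apply: s1P; lia.
  + have -> : (i <= n1)%N = false by lia.
    have -> : (i.+1 <= n1)%N = false by lia.
    have -> : (i.+1 - n1.+1 = (i - n1.+1).+1)%N by lia.
    by apply: s2P; lia.
  + by rewrite leqnn ltnn subnn s20 -s1n; exact: s1P.
Qed.

Lemma chain_len1 e a b : ball (f a) e b -> chain_len e 0 a b.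
Proof.
move=> fab; exists (fun i => if i is 0%N then a else b); split => //.
by move=> i; rewrite leqn0 => /eqP ->.
Qed.

Lemma chain_len_orbit e x z n : 0 < e -> ball (iter n.+1 f x) e z -> chain_len e n x z.
Proof.
move=> e_gt0 xz; exists (fun i => if (i <= n)%N then iter i f x else z); split.
- by rewrite leq0n.
- by rewrite ltnn.
- move=> i i_le; rewrite i_le; have [->|->] : (i < n \/ i = n)%N by lia.
    exact: ballxx.
  by rewrite ltnn.
Qed.

Lemma chain_rel_trans a b c : chain_rel f a b -> chain_rel f b c -> chain_rel f a c.
Proof.
move=> ab bc e e_gt0.
have /eps_chainE [n1 ab_e] := ab e e_gt0.
have /eps_chainE [n2 bc_e] := bc e e_gt0.
by apply/eps_chainE; exists (n1 + n2).+1; exact: chain_len_cat ab_e bc_e.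
Qed.

Lemma chain_class_eq x y :
  chain_rel f x y -> chain_rel f y x -> chain_class x = chain_class y.
Proof.
move=> xy yx; apply/seteqP; split=> z [? ?]; split.
- exact: chain_rel_trans yx _.
- exact: chain_rel_trans xy.
- exact: chain_rel_trans xy _.
- exact: chain_rel_trans yx.
Qed.

Lemma omega_limitP x z : omega_limit f x z <->
  forall e, 0 < e -> forall N, exists2 m, (N <= m)%N & ball z e (iter m f x).
Proof.
split=> [zx e e_gt0 N|zx N _ B /nbhs_ballP [e e_gt0 zeB]].
  have [y [[m Nm <-] zm]] := zx N Logic.I _ (nbhsx_ballx z e e_gt0).
  by exists m.
have [m Nm zm] := zx e e_gt0 N.
by exists (iter m f x); split; [exists m | exact: zeB].
Qed.

Lemma omega_limit_neq0 x : compact [set: X] -> omega_limit f x !=set0.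
Proof.
move=> cX; pose T N := [set iter m f x | m in [set m | (N <= m)%N]].
have Tn0 N : T N !=set0 by exists (iter N f x), N => /=.
have T_nonincr n m : (n <= m)%N -> T m `<=` T n.
  by move=> nm _ [k mk <-]; exists k => //; exact: leq_trans mk.
have [z zT] := compact_nonincreasing_closure cX Tn0 T_nonincr.
by exists z => N _; exact: zT.
Qed.

Lemma chain_rel_to_omega_limit x z : omega_limit f x z -> chain_rel f x z.
Proof.
move=> /omega_limitP zx e e_gt0; have [m m_gt0 zm] := zx e e_gt0 1%N.
apply/eps_chainE; exists m.-1; apply: chain_len_orbit => //.
by rewrite prednK //; exact: ball_sym.
Qed.

Hypothesis fc : continuous f.

(* Extend a chain [a = s0, s1, s2, ...] to [b] by a loop at [b], so that it
   has at least two jumps, and replace [s0] by [f a]: as [s1] is close to [f a],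
   continuity at [f a] makes [f s1], hence [s2], close to [f (f a)]. *)
Lemma chain_rel_apply a b :
  chain_rel f a b -> chain_recurrent f b -> chain_rel f (f a) b.
Proof.
move=> ab bb e e_gt0.
have e2_gt0 : 0 < e / 2 by rewrite divr_gt0.
have [d d_gt0 fad] := continuous_ball (f a) fc e2_gt0.
pose d' := Num.min d (e / 2).
have d'_gt0 : 0 < d' by rewrite lt_min d_gt0 e2_gt0.
have d'_le_d : d' <= d by rewrite ge_min lexx.
have d'_le_e : d' <= e by rewrite ge_min; apply/orP; right; lra.
have /eps_chainE [n1 ab_d'] := ab _ d'_gt0.
have /eps_chainE [n2 bb_d'] := bb _ d'_gt0.
have [s [s0 sn sP]] := chain_len_cat ab_d' bb_d'.
apply/eps_chainE; exists (n1 + n2)%N.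
exists (fun i => if i is 0%N then f a else s i.+1); split => // -[|i] i_le.
- have s01 := sP 0%N (leq0n _); rewrite s0 in s01.
  have fs12 := sP 1%N (ltn0Sn _).
  rewrite (splitr e); apply: ball_triangle (fad _ (le_ball d'_le_d s01)) _.
  by apply: le_ball fs12; rewrite ge_min lexx orbT.
- by have /(le_ball d'_le_e) := sP i.+2 i_le.
Qed.

Lemma chain_rel_iter y : chain_recurrent f y -> forall m, chain_rel f (iter m f y) y.
Proof. by move=> yy; elim=> [//|m IHm] /=; exact: chain_rel_apply. Qed.

(* [z] chains back to itself: one jump from [z] to the orbit point [f^(m+1) x]
   close to [f z], then along the orbit to a later visit [f^m' x] close to [z]. *)
Lemma omega_limit_chain_recurrent x z : omega_limit f x z -> chain_recurrent f z.
Proof.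
move=> /omega_limitP zx e e_gt0.
have [d d_gt0 zd] := continuous_ball z fc e_gt0.
have [m _ zm] := zx d d_gt0 0%N.
have [m' m'_ge zm'] := zx e e_gt0 m.+2.
apply/eps_chainE; exists (0 + (m' - m.+2)).+1; apply: chain_len_cat.
  exact/(@chain_len1 e z (iter m.+1 f x))/zd.
apply: chain_len_orbit => //; rewrite -iterD.
have -> : ((m' - m.+2).+1 + m.+1 = m')%N by lia.
exact: ball_sym.
Qed.

Lemma chain_rel_from_omega_limit y w :
  chain_recurrent f y -> omega_limit f y w -> chain_rel f w y.
Proof.
move=> yy /omega_limitP wy e e_gt0.
have [d d_gt0 wd] := continuous_ball w fc e_gt0.
have [m _ wm] := wy d d_gt0 0%N.
have /eps_chainE [n ym] := chain_rel_iter yy m.+1 e_gt0.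
apply/eps_chainE; exists (0 + n).+1; apply: chain_len_cat ym.
exact/chain_len1/wd.
Qed.

End chains.

Section semiconjugacy.
Context {R : realType} (X1 X2 : pseudoPMetricType R)
  (f1 : X1 -> X1) (f2 : X2 -> X2) (h : X1 -> X2).
Hypothesis hf : h \o f1 = f2 \o h.

Lemma semiconj_apply x : h (f1 x) = f2 (h x).
Proof. exact: (congr1 (fun g => g x) hf). Qed.

Lemma iter_semiconj m x : h (iter m f1 x) = iter m f2 (h x).
Proof. by elim: m => [//|m /= <-]; exact: semiconj_apply. Qed.

Lemma preimage_semiconj (A : set X2) : h @^-1` (f2 @^-1` A) = f1 @^-1` (h @^-1` A).
Proof. by apply/seteqP; split=> x /=; rewrite semiconj_apply. Qed.

Hypotheses (cX1 : compact [set: X1]) (hc : continuous h).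

Lemma chain_rel_image a b : chain_rel f1 a b -> chain_rel f2 (h a) (h b).
Proof.
move=> ab e e_gt0; have [d d_gt0 hd] := compact_uniform_continuity cX1 hc e_gt0.
have /eps_chainE [n [s [s0 sn sP]]] := ab d d_gt0.
apply/eps_chainE; exists n, (h \o s); split => /=; [by rewrite s0 | by rewrite sn |].
by move=> i i_le; rewrite -semiconj_apply; exact: hd (sP i i_le).
Qed.

Lemma chain_class_image x : h @` chain_class f1 x `<=` chain_class f2 (h x).
Proof. by move=> _ [y [xy yx] <-]; split; exact: chain_rel_image. Qed.

Lemma basic_set_chain_class_image x :
  chain_recurrent f1 x -> basic_set f2 (chain_class f2 (h x)).
Proof. by exists (h x); split => //; exact: chain_rel_image. Qed.

Lemma omega_limit_image x : h @` omega_limit f1 x `<=` omega_limit f2 (h x).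
Proof.
move=> _ [z /omega_limitP zx <-]; apply/omega_limitP => e e_gt0 N.
have [d d_gt0 zd] := continuous_ball z hc e_gt0.
have [m Nm zm] := zx d d_gt0 N.
by exists m => //; rewrite -iter_semiconj; exact: zd.
Qed.

Hypothesis hX2 : hausdorff_space X2.

(* [z] is a cluster point of the orbit points [f1^m x] whose images approach [w]. *)
Lemma omega_limit_lift x w :
  omega_limit f2 (h x) w -> exists2 z, omega_limit f1 x z & h z = w.
Proof.
move=> /omega_limitP wx.
pose T N := [set iter m f1 x | m in
  [set m | (N <= m)%N /\ ball w N.+1%:R^-1 (h (iter m f1 x))]].
have Tn0 N : T N !=set0.
  have r_gt0 : 0 < N.+1%:R^-1 :> R by rewrite invr_gt0.
  have [m Nm wm] := wx _ r_gt0 N.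
  by exists (iter m f1 x), m; rewrite //= iter_semiconj.
have T_nonincr n m : (n <= m)%N -> T m `<=` T n.
  move=> nm _ [k [mk wk] <-]; exists k => //; split; first exact: leq_trans mk.
  by apply: le_ball wk; rewrite lef_pV2 ?posrE ?ltr0n // ler_nat.
have [z zT] := compact_nonincreasing_closure cX1 Tn0 T_nonincr.
exists z; first by move=> N _; apply: closureS (zT N) => _ [m [Nm _] <-]; exists m.
apply: hX2 => A B /nbhs_ballP [e1 e1_gt0 e1A] /nbhs_ballP [e2 e2_gt0 e2B].
pose e := Num.min e1 e2.
have e_gt0 : 0 < e by rewrite lt_min e1_gt0 e2_gt0.
have [d d_gt0 zd] := continuous_ball z hc e_gt0.
near \oo => N.
have [_ [[m [Nm wm] <-] zm]] := zT N _ (nbhsx_ballx z d d_gt0).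
exists (h (iter m f1 x)); split.
  by apply/e1A/(le_ball _ (zd _ zm)); rewrite ge_min lexx.
apply/e2B/(@le_ball _ _ _ e); first by rewrite ge_min lexx orbT.
apply: le_ball wm; apply: ltW.
by near: N; exact: (near_infty_natSinv_lt (PosNum e_gt0)).
Unshelve. all: by end_near.
Qed.

Lemma visible_chain_class_image x : almost_open h ->
  visible f1 (chain_class f1 x) -> visible f2 (chain_class f2 (h x)).
Proof.
move=> h_ao /h_ao; apply: subset_nonempty; apply: interiorS.
move=> _ [x' x'B <-] w /omega_limit_lift [z /x'B xz <-].
by apply: chain_class_image; exists z.
Qed.

Hypotheses (f1c : continuous f1) (f2c : continuous f2).
Hypothesis h_surj : forall y, exists x, h x = y.

(* The chain class of [y = h x0] is that of [h z], for [z] in the omega-limit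
   of [x0]. *)
Lemma basic_set_lift B2 : basic_set f2 B2 ->
  exists2 B1, basic_set f1 B1 & B2 = \bigcup_(x in B1) chain_class f2 (h x).
Proof.
move=> [y [yy ->]]; have [x0 hx0] := h_surj y.
have [z zx0] := omega_limit_neq0 f1 x0 cX1.
have zz := omega_limit_chain_recurrent f1c zx0.
have hz_x0 : omega_limit f2 y (h z) by rewrite -hx0; apply: omega_limit_image; exists z.
rewrite -/(chain_class f2 y).
have -> : chain_class f2 y = chain_class f2 (h z).
  apply: chain_class_eq; first exact: chain_rel_to_omega_limit hz_x0.
  exact: chain_rel_from_omega_limit hz_x0.
exists (chain_class f1 z); first by exists z.
apply/seteqP; split=> [y' hz_y'|y' [x [zx xz] hx_y']]; first by exists z.
by rewrite -(chain_class_eq (chain_rel_image xz) (chain_rel_image zx)).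
Qed.

Lemma TRAC1_push : TRAC1 f1 -> TRAC1 f2.
Proof.
move=> fin1; apply: sub_finite_set
  (finite_image (fun B1 => \bigcup_(x in B1) chain_class f2 (h x)) fin1).
by move=> B2 /basic_set_lift [B1 B1_basic ->]; exists B1.
Qed.

End semiconjugacy.

Section borel.
Context {R : realType}.
Local Open Scope ereal_scope.

Lemma open_borel (X : pseudoPMetricType R) (U : set X) :
  open U -> measurable (U : set (borel X)).
Proof. exact: sub_sigma_algebra. Qed.

Lemma closed_borel (X : pseudoPMetricType R) (F : set X) :
  closed F -> measurable (F : set (borel X)).
Proof.
move=> cF; rewrite -(setCK F); apply: measurableC; apply: open_borel.
exact: closed_openC.
Qed.

Lemma continuous_borel_measurable (X Y : pseudoPMetricType R) (g : X -> Y) :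
  continuous g -> measurable_fun [set: borel X] (g : borel X -> borel Y).
Proof.
move=> gc; apply: (@measurability _ _ (borel X) (borel Y) _ _ (@open Y) erefl).
move=> _ [B oB <-]; rewrite setTI; apply: open_borel.
exact: (continuousP _).1 gc _ oB.
Qed.

Lemma continuous_preimage_borel (X Y : pseudoPMetricType R) (g : X -> Y)
    (A : set (borel Y)) :
  continuous g -> measurable A -> measurable (g @^-1` A : set (borel X)).
Proof.
by move=> gc mA; have := continuous_borel_measurable gc measurableT mA; rewrite setTI.
Qed.

Lemma continuous_borel_measurable_real (X : pseudoPMetricType R) (u : X -> R) :
  continuous u -> measurable_fun [set: borel X] u.
Proof.
move=> uc; apply: measurability (measurable_realfun.RGenInftyO.measurableE R) _.
move=> _ [_ [x ->] <-]; rewrite setTI; apply: open_borel.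
exact: (continuousP _).1 uc _ (interval_open _ _).
Qed.

Lemma support_closed (X : pseudoPMetricType R) (mu : set (borel X) -> \bar R) :
  closed (Defs.support mu).
Proof.
move=> x x_cl U oU Ux.
by have [y [y_supp Uy]] := x_cl U (open_nbhs_nbhs (conj oU Ux)); exact: y_supp.
Qed.

(* Cover [K] by null open sets (every point off the support has one) and
   extract a finite subcover. *)
Lemma compact_null_nbhs (X : pseudoPMetricType R)
    (mu : {measure set (borel X) -> \bar R}) (K : set X) :
  compact K -> K `&` Defs.support mu = set0 ->
  exists V : set X, [/\ open V, K `<=` V & mu V = 0].
Proof.
move=> cK K_supp.
pose D := [set U : set X | open U /\ mu U = 0].
have K_cover : K `<=` \bigcup_(U in D) U.
  move=> x Kx; have /existsNP [U /not_implyP [oU /not_implyP [Ux /negP]]] :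
      ~ Defs.support mu x by move=> sx; suff : set0 x by []; rewrite -K_supp.
  rewrite -leNgt => U_le0; exists U => //; split => //.
  by apply/eqP; rewrite eq_le U_le0 measure_ge0.
move: cK; rewrite compact_cover => cK.
have [D' D'D K_D'] := cK _ D id (fun _ DU => DU.1) K_cover.
have D'_open (U : set X) : U \in D' -> open U /\ mu U = 0 by move/D'D; rewrite in_setE.
exists (\bigcup_(U in [set` D']) U); split => //.
  by apply: bigcup_open => U /D'_open [].
rewrite bigcup_fset big_seq; apply: measure_negligible.
  by apply: bigsetU_measurable => U /D'_open [/open_borel].
elim/big_ind: _ => [|A B|U /D'_open [oU U0]].
- exact: negligible_set0.
- exact: negligibleU.
by exists U; split => //; exact: open_borel.
Qed.

End borel.

Section inner_regularity.
Context {R : realType} (X : pseudoPMetricType R)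
  (mu : {measure set (borel X) -> \bar R}).
Hypothesis mu_fin : (mu [set: X] < +oo)%E.
Local Open Scope ereal_scope.

Lemma measure_bigcup_tail (B : nat -> set X) :
  (forall n, measurable (B n : set (borel X))) ->
  forall e : R, (0 < e)%R ->
  exists N, mu (\bigcup_n B n `\` \bigcup_(i < N) B i) < e%:E.
Proof.
move=> mB e e_gt0.
pose G N := \bigcup_n B n `\` \bigcup_(i < N) B i.
have mG N : measurable (G N : set (borel X)).
  apply: measurableD; first exact: bigcupT_measurable.
  by rewrite bigcup_mkord; exact: bigsetU_measurable.
have G_nonincr : {homo G : n m / (n <= m)%N >-> (m <= n)%O}.
  move=> n m nm; apply/subsetPset => x [Bx nBx]; split => // -[i /= i_lt Bix].
  by apply: nBx; exists i => //=; exact: leq_trans i_lt nm.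
have G_cap : \bigcap_n G n = set0.
  apply/seteqP; split => // x Gx; have [i _ Bix] := (Gx 0%N Logic.I).1.
  by have [_] := Gx i.+1 Logic.I; apply; exists i => /=.
have mG0_fin : mu (G 0%N) < +oo.
  by apply: le_lt_trans mu_fin; apply: le_measure; rewrite ?in_setE.
have mG_cap : measurable (\bigcap_n G n : set (borel X)) by rewrite G_cap.
have := nonincreasing_cvg_mu mG0_fin mG mG_cap G_nonincr.
move=> /(_ [set y | y < e%:E]) [|N _ GN]; last by exists N; exact: GN N (leqnn N).
rewrite G_cap measure0; apply: open_nbhs_nbhs; split; first exact: open_ereal_lt_ereal.
by rewrite /= lte_fin.
Qed.

Lemma measure_bigcup_geometric (C : nat -> set X) (e : R) : (0 <= e)%R ->
  (forall n, measurable (C n : set (borel X))) ->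
  (forall n, mu (C n) <= (e / (2 ^ n.+1)%:R)%:E) -> mu (\bigcup_n C n) <= e%:E.
Proof.
move=> e_ge0 mC muC.
have mCC : measurable (\bigcup_n C n : set (borel X)) by exact: bigcupT_measurable.
apply: le_trans (measure_sigma_subadditive _ mC mCC (@subset_refl _ _)) _.
apply: le_trans (epsilon_trick0 xpredT e_ge0).
by apply: lee_nneseries => [n _ _|n _]; [exact: measure_ge0 | exact: muC].
Qed.

Definition regular_set (A : set X) := forall e : R, (0 < e)%R ->
  exists F U : set X, [/\ closed F, open U, F `<=` A, A `<=` U & mu (U `\` F) < e%:E].

Lemma regular_setC A : regular_set A -> regular_set (~` A).
Proof.
move=> rA e e_gt0; have [F [U [cF oU FA AU FU]]] := rA e e_gt0.
exists (~` U), (~` F); split; [exact: open_closedC | exact: closed_openC | | |].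
- exact: subsetC.
- exact: subsetC.
- by rewrite setDE setCK setIC -setDE.
Qed.

Lemma open_regular_set U : open U -> regular_set U.
Proof.
move=> oU e e_gt0.
pose F n := closure [set x | ball x n.+1%:R^-1 `<=` U].
have FU n : F n `<=` U.
  move=> x Fx; have r_gt0 : (0 < n.+1%:R^-1 / 2 :> R)%R by rewrite divr_gt0.
  have [y [yU xy]] := Fx _ (nbhsx_ballx x _ r_gt0).
  apply: yU; apply: le_ball (ball_sym xy).
  by rewrite ler_pdivrMr // ler_peMr ?invr_ge0 // ler1n.
have UF : U = \bigcup_n F n.
  apply/seteqP; split=> [x Ux|x [n _ /FU//]].
  have /nbhs_ballP [r r_gt0 rU] := open_nbhs_nbhs (conj oU Ux).
  near \oo => n; exists n => //; apply: subset_closure => y xy; apply: rU.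
  apply: le_ball xy; apply: ltW.
  by near: n; exact: (near_infty_natSinv_lt (PosNum r_gt0)).
have mF n : measurable (F n : set (borel X)).
  by apply: closed_borel; exact: closed_closure.
have [N UFN] := measure_bigcup_tail mF e_gt0.
exists (\bigcup_(i < N) F i), U; split => //.
- by rewrite bigcup_mkord; apply: closed_bigsetU => i _; exact: closed_closure.
- by move=> x [i _ /FU].
- by rewrite {1}UF.
Unshelve. all: by end_near.
Qed.

Lemma bigcup_regular_set (A : nat -> set X) :
  (forall n, regular_set (A n)) -> regular_set (\bigcup_n A n).
Proof.
move=> rA e e_gt0.
have e2_gt0 : (0 < e / 2)%R by rewrite divr_gt0.
pose eps n := (e / 2 / (2 ^ n.+1)%:R)%R.
have eps_gt0 n : (0 < eps n)%R by rewrite divr_gt0 // ltr0n expn_gt0.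
have /choice [FU FUP] n : exists p : set X * set X,
    [/\ closed p.1, open p.2, p.1 `<=` A n, A n `<=` p.2 & mu (p.2 `\` p.1) < (eps n)%:E].
  by have [F [U ?]] := rA n _ (eps_gt0 n); exists (F, U).
pose F n := (FU n).1; pose U n := (FU n).2.
have mF n : measurable (F n : set (borel X)) by apply: closed_borel; case: (FUP n).
have mU n : measurable (U n : set (borel X)) by apply: open_borel; case: (FUP n).
have mUF : measurable (\bigcup_n (U n `\` F n) : set (borel X)).
  by apply: bigcupT_measurable => n; exact: measurableD.
have UF_le : mu (\bigcup_n (U n `\` F n)) <= (e / 2)%:E.
  apply: (@measure_bigcup_geometric (fun n => U n `\` F n) _ (ltW e2_gt0)) => n.
    exact: measurableD.
  by case: (FUP n) => _ _ _ _ /ltW.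
have [N FN] := measure_bigcup_tail mF e2_gt0.
have mFN : measurable (\bigcup_(i < N) F i : set (borel X)).
  by rewrite bigcup_mkord; exact: bigsetU_measurable.
exists (\bigcup_(i < N) F i), (\bigcup_n U n); split.
- by rewrite bigcup_mkord; apply: closed_bigsetU => i _; case: (FUP i).
- by apply: bigcup_open => n _; case: (FUP n).
- by move=> x [i _ Fix]; exists i => //; case: (FUP i) => _ _ + _ _; apply.
- by move=> x [i _ Aix]; exists i => //; case: (FUP i) => _ _ _ + _; apply.
have UF_sub : \bigcup_n U n `\` \bigcup_(i < N) F i `<=`
    \bigcup_n (U n `\` F n) `|` (\bigcup_n F n `\` \bigcup_(i < N) F i).
  move=> x [[n _ Unx] nFx]; have [FFx|nFFx] := pselect ((\bigcup_n F n) x).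
    by right.
  by left; exists n => //; split => // Fnx; apply: nFFx; exists n.
have mFFN : measurable (\bigcup_n F n `\` \bigcup_(i < N) F i : set (borel X)).
  by apply: measurableD mFN; exact: bigcupT_measurable.
have mUFN : measurable (\bigcup_n U n `\` \bigcup_(i < N) F i : set (borel X)).
  by apply: measurableD mFN; exact: bigcupT_measurable.
have UF_le_mu : mu (\bigcup_n U n `\` \bigcup_(i < N) F i) <=
    mu (\bigcup_n (U n `\` F n) `|` (\bigcup_n F n `\` \bigcup_(i < N) F i)).
  by apply: le_measure; rewrite ?in_setE //; exact: measurableU.
apply: le_lt_trans UF_le_mu _.
apply: le_lt_trans (measureU2 _ mUF mFFN) _.
rewrite [e]splitr EFinD; apply: lee_ltD => //.
by rewrite ge0_fin_numE ?measure_ge0 // (le_lt_trans UF_le) ?ltry.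
Qed.

Lemma measurable_regular_set A : measurable (A : set (borel X)) -> regular_set A.
Proof.
have : sigma_algebra [set: X] regular_set.
  split; [exact/open_regular_set/open0 | |exact: bigcup_regular_set].
  by move=> B rB; rewrite setTD; exact: regular_setC.
by move/smallest_sub => /(_ _ open_regular_set); apply.
Qed.

Lemma measurable_inner_closed A : measurable (A : set (borel X)) ->
  forall e : R, (0 < e)%R -> exists F, [/\ closed F, F `<=` A & mu (A `\` F) < e%:E].
Proof.
move=> mA e e_gt0; have [F [U [cF oU FA AU FU]]] := measurable_regular_set mA e_gt0.
exists F; split => //; apply: le_lt_trans _ FU; apply: le_measure; rewrite ?in_setE.
- by apply: measurableD mA _; exact: closed_borel.
- by apply: measurableD; [exact: open_borel | exact: closed_borel].
- by move=> x [Ax nFx]; split => //; exact: AU.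
Qed.

Lemma measurable_inner_sigma_closed M : measurable (M : set (borel X)) ->
  exists F : nat -> set X, [/\ forall n, closed (F n), forall n, F n `<=` M &
    mu.-negligible (M `\` \bigcup_n F n)].
Proof.
move=> mM; have /choice [F FP] n : exists F, [/\ closed F, F `<=` M &
    mu (M `\` F) < (n.+1%:R^-1)%R%:E].
  have r_gt0 : (0 < n.+1%:R^-1 :> R)%R by rewrite invr_gt0.
  exact: measurable_inner_closed mM _ r_gt0.
have cF n : closed (F n) by case: (FP n).
exists F; split => [//|n|]; first by case: (FP n).
have mMF : measurable (M `\` \bigcup_n F n : set (borel X)).
  by apply: measurableD mM _; apply: bigcupT_measurable => n; exact: closed_borel.
apply/negligibleP => //; apply/eqP; rewrite eq_le measure_ge0 andbT.
apply/lee_addgt0Pr => eps eps_gt0; rewrite add0e.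
near \oo => n.
have mMFn : measurable (M `\` F n : set (borel X)).
  by apply: measurableD mM _; exact: closed_borel.
have [_ _ MFn_lt] := FP n.
have MF_le : mu (M `\` \bigcup_n F n) <= mu (M `\` F n).
  apply: le_measure; rewrite ?in_setE //.
  by move=> x [Mx nFx]; split => // Fnx; apply: nFx; exists n.
apply: le_trans MF_le (ltW (lt_le_trans MFn_lt _)).
rewrite lee_fin; apply: ltW.
by near: n; exact: (near_infty_natSinv_lt (PosNum eps_gt0)).
Unshelve. all: by end_near.
Qed.

End inner_regularity.

Section pushforward.
Context {R : realType} (X1 X2 : pseudoPMetricType R) (h : X1 -> X2).
Hypotheses (cX1 : compact [set: X1]) (hX2 : hausdorff_space X2) (hc : continuous h).
Local Open Scope ereal_scope.

Lemma compact_image (K : set X1) : closed K -> compact (h @` K).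
Proof.
move=> cK; apply: continuous_compact (continuous_subspaceT hc) _.
exact: subclosed_compact cK cX1 (@subsetT _ _).
Qed.

(* [h] is a closed map, so a point [y] off the compact set [h @` support mu]
   has a closed ball around it whose preimage is a compact set missing the
   support, hence contained in a null open set. *)
Lemma support_push (mu : {measure set (borel X1) -> \bar R}) :
  Defs.support (push h mu) `<=` h @` Defs.support mu.
Proof.
move=> y y_supp; apply: contrapT => y_nimg.
have /closed_openC oK := compact_closed hX2 (compact_image (support_closed (mu:=mu))).
have /nbhs_ballP [r r_gt0 rK] := open_nbhs_nbhs (conj oK y_nimg).
have r2_gt0 : (0 < r / 2)%R by rewrite divr_gt0.
pose C := h @^-1` closure (ball y (r / 2)).
have cC : compact C.
  apply: subclosed_compact _ cX1 (@subsetT _ _).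
  exact: (continuous_closedP h).1 hc _ (@closed_closure _ _).
have [|V [oV CV V0]] := compact_null_nbhs (mu:=mu) cC.
  apply/seteqP; split => // x [Cx x_supp]; apply: (rK (h x)); last by exists x.
  have [z [yz hxz]] := Cx _ (nbhsx_ballx (h x) _ r2_gt0).
  exact: ball_split yz (ball_sym hxz).
pose U := interior (ball y (r / 2)).
have hU_le : mu (h @^-1` U) <= mu V.
  apply: le_measure; rewrite ?in_setE.
  - by apply: (continuous_preimage_borel hc); apply: open_borel; exact: open_interior.
  - exact: open_borel.
  - by move=> x /interior_subset Ux; apply: CV; exact: subset_closure.
have := y_supp U (@open_interior _ _) (nbhsx_ballx y _ r2_gt0).
by rewrite /push => /lt_le_trans /(_ hU_le); rewrite V0 ltxx.
Qed.

Lemma mean_push (mu : {measure set (borel X1) -> \bar R}) (u : X2 -> R) :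
  mu [set: X1] < +oo -> continuous u -> mean (push h mu) u = mean mu (u \o h).
Proof.
move=> mu_fin uc.
have uhc : continuous (u \o h) by move=> x; apply: continuous_comp; [exact: hc|exact: uc].
have mu_EF : measurable_fun [set: borel X2] (fun x => (u x)%:E).
  by apply/measurable_EFinP; exact: continuous_borel_measurable_real.
have uh_int : mu.-integrable (h @^-1` [set: X2]) ((fun x => (u x)%:E) \o h).
  rewrite preimage_setT; apply: measurable_bounded_integrable => //.
    exact: continuous_borel_measurable_real.
  have /compact_bounded uh_bnd := continuous_compact (continuous_subspaceT uhc) cX1.
  rewrite /bounded_near; near=> M => x _.
  suff : globally [set (u \o h) x | x in [set: X1]] [set y : R | (`|y| <= M)%R].
    by apply; exists x.
  by near: M.
rewrite /mean.
have := integral_pushforward (continuous_borel_measurable hc) mu_EF uh_int measurableT.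
by rewrite preimage_setT => <-.
Unshelve. all: by end_near.
Qed.

(* Inside the [mu]-full set [P] sits a sigma-compact set of full measure;
   its image is a Borel set of full [push h mu]-measure inside [h @` P]. *)
Lemma null_set_push_image (mu : {measure set (borel X1) -> \bar R}) (P : set X1) :
  mu [set: X1] < +oo -> Defs.null_set mu (~` P) ->
  Defs.null_set (push h mu) (~` (h @` P)).
Proof.
move=> mu_fin [A [mA A0 PA]].
have [F [cF FA nF]] := measurable_inner_sigma_closed mu_fin (measurableC mA).
pose S := \bigcup_n h @` F n.
have mS : measurable (S : set (borel X2)).
  apply: bigcupT_measurable => n; apply: closed_borel.
  by apply: compact_closed hX2 _; exact: compact_image.
exists (~` S); split; first exact: measurableC.
  rewrite /push; apply: measure_negligible.
    by apply: (continuous_preimage_borel hc); exact: measurableC.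
  apply: negligibleS (negligibleU ((negligibleP _ mA).2 A0) nF) => x nSx.
  have [Ax|nAx] := pselect (A x); [by left | right; split => // -[n _ Fnx]].
  by apply: nSx; exists n => //; exists x.
apply: subsetC => _ [n _ [x Fnx <-]]; exists x => //.
by apply: contrapT => /PA /(FA n x Fnx).
Qed.

Lemma TRAC4_push (mu0 : {measure set (borel X1) -> \bar R}) (k : nat)
    (mus : 'I_k -> {measure set (borel X1) -> \bar R}) :
  almost_one_to_one h mu0 -> TRAC4 mu0 (fun i => mus i) ->
  TRAC4 (push h mu0) (fun i => push h (mus i)).
Proof.
move=> [A [mA A0 nonsingA]] T4 i j ij.
pose S := Defs.support (mus i) `&` Defs.support (mus j).
have mS : measurable (S : set (borel X1)).
  by apply: measurableI; apply: closed_borel; exact: support_closed.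
rewrite /push; apply: measure_negligible.
  apply: (continuous_preimage_borel hc); apply: closed_borel.
  by apply: closedI; exact: support_closed.
have nS : mu0.-negligible S by exists S; split => //; exact: T4.
have nA : mu0.-negligible A by exists A; split.
apply: negligibleS (negligibleU nS nA).
move=> x [/support_push [s si hs] /support_push [t tj ht]].
have [h_inj_x|] := pselect (h @^-1` [set h x] = [set x]); last by right; exact: nonsingA.
have sx : s = x by have : (h @^-1` [set h x]) s := hs; rewrite h_inj_x.
have tx : t = x by have : (h @^-1` [set h x]) t := ht; rewrite h_inj_x.
by left; split; [rewrite -sx | rewrite -tx].
Qed.

End pushforward.

Section factor.
Context {R : realType} (X1 X2 : pseudoPMetricType R)
  (f1 : X1 -> X1) (f2 : X2 -> X2) (h : X1 -> X2).
Hypotheses (cX1 : compact [set: X1]) (hX2 : hausdorff_space X2)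
  (hc : continuous h) (hf : h \o f1 = f2 \o h) (h_surj : forall y, exists x, h x = y).
Local Open Scope ereal_scope.

Lemma background_measure_push (mu0 : {measure set (borel X1) -> \bar R}) :
  background_measure mu0 -> background_measure (push h mu0).
Proof.
move=> [mu0_1 mu0_full]; split; first by rewrite /probability_measure /push preimage_setT.
move=> U oU [y Uy]; apply: mu0_full; first exact: (continuousP _).1 hc _ oU.
by have [x hxy] := h_surj y; exists x; rewrite /= hxy.
Qed.

Lemma ergodic_measure_push (mu : set (borel X1) -> \bar R) :
  ergodic_measure f1 mu -> ergodic_measure f2 (push h mu).
Proof.
move=> [mu_1 mu_inv mu_erg]; split.
- by rewrite /probability_measure /push preimage_setT.
- move=> A mA; rewrite /push (preimage_semiconj hf).
  by apply: mu_inv; exact: continuous_preimage_borel.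
- move=> A mA f2A; apply: mu_erg; first exact: continuous_preimage_borel.
  by rewrite -(preimage_semiconj hf) f2A.
Qed.

Lemma generic_push (mu : {measure set (borel X1) -> \bar R}) x :
  mu [set: X1] < +oo -> generic f1 mu x -> generic f2 (push h mu) (h x).
Proof.
move=> mu_fin x_gen u uc; rewrite mean_push //.
have uhc : continuous (u \o h) by move=> y; apply: continuous_comp; [exact: hc|exact: uc].
suff -> : (fun n : nat => (n%:R^-1 * \sum_(i < n) u (iter i f2 (h x)))%R) =
          (fun n : nat => (n%:R^-1 * \sum_(i < n) (u \o h) (iter i f1 x))%R).
  exact: x_gen.
apply: funext => n; congr (_ * _)%R; apply: eq_bigr => i _.
by rewrite /= (iter_semiconj hf).
Qed.

Lemma TRAC2_push (mu0 : {measure set (borel X1) -> \bar R}) (k : nat)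
    (mus : 'I_k -> {measure set (borel X1) -> \bar R}) :
  background_measure mu0 -> TRAC2 f1 mu0 (fun i => mus i) ->
  TRAC2 f2 (push h mu0) (fun i => push h (mus i)).
Proof.
move=> [mu0_1 _] [mus_erg gen_full]; split => [i|].
  exact: ergodic_measure_push.
have [|S [mS S0 nS]] := null_set_push_image cX1 hX2 hc _ gen_full.
  by rewrite mu0_1 ltry.
exists S; split => //; apply: subset_trans nS; apply: subsetC.
move=> _ [x [i x_gen] <-]; exists i; apply: generic_push x_gen.
by have [mu_1 _ _] := mus_erg i; rewrite mu_1 ltry.
Qed.

Lemma TRAC3_push (k : nat) (mus : 'I_k -> {measure set (borel X1) -> \bar R}) :
  almost_open h -> TRAC3 f1 (fun i => mus i) -> TRAC3 f2 (fun i => push h (mus i)).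
Proof.
move=> h_ao T3 i; have [_ [[x [xx ->]] B_vis supp_B]] := T3 i.
exists (chain_class f2 (h x)); split.
- exact: (basic_set_chain_class_image hf cX1 hc xx).
- exact: (visible_chain_class_image hf cX1 hc hX2 h_ao B_vis).
- move=> y /(support_push cX1 hX2 hc) [z /supp_B xz <-].
  by apply: (chain_class_image hf cX1 hc); exists z.
Qed.

End factor.

Theorem theorem2p7 (R : realType) (X1 X2 : pseudoPMetricType R)
    (f1 : X1 -> X1) (f2 : X2 -> X2) (h : X1 -> X2)
    (mu0 : {measure set (borel X1) -> \bar R})
    (k : nat) (mus : 'I_k -> {measure set (borel X1) -> \bar R}) :
  dyn_system f1 -> dyn_system f2 ->
  continuous h -> (forall y : X2, exists x : X1, h x = y) -> h \o f1 = f2 \o h ->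
  background_measure mu0 ->
  TRAC1 f1 -> TRAC2 f1 mu0 (fun i => mus i) ->
  [/\ background_measure (push h mu0),
      TRAC1 f2,
      TRAC2 f2 (push h mu0) (fun i => push h (mus i)),
      (almost_open h -> TRAC3 f1 (fun i => mus i) ->
         TRAC3 f2 (fun i => push h (mus i))) &
      (almost_open h -> TRAC3 f1 (fun i => mus i) ->
       almost_one_to_one h mu0 -> TRAC4 mu0 (fun i => mus i) ->
         TRAC4 (push h mu0) (fun i => push h (mus i)))].
Proof.
move=> [_ cX1 f1c] [hX2 _ f2c] hc h_surj hf mu0_bg T1 T2; split.
- exact: (background_measure_push hc h_surj).
- exact: (TRAC1_push hf cX1 hc f1c f2c h_surj).
- exact: (TRAC2_push cX1 hX2 hc hf).
- exact: (TRAC3_push cX1 hX2 hc hf).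
- by move=> _ _; exact: (TRAC4_push cX1 hX2 hc).
Qed.
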